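(* Let $\lambda=\sum_{i=1}^r m_i\omega_i\in P^+$. Then $V(\lambda)=\sum_{k_1,\dots,k_r\in\mathbb N,\ k_1\le m_1}\mathbf U(\mathfrak n^-_{r-1/2})(x^-_{1,r})^{k_1}\cdots(x^-_{r,r})^{k_r}v_\lambda$.
   Context: $\mathfrak g=\mathfrak{sp}_{2r}$: complex matrices $(a_{i,j})$, indices $1,\dots,r,-r,\dots,-1$, $a_{i,j}=-\mathrm{sgn}(i)\mathrm{sgn}(j)a_{-j,-i}$; $\mathfrak h$ spanned by $E_{i,i}-E_{-i,-i}$, dual basis $\varepsilon_i$; $\omega_i=\varepsilon_1+\dots+\varepsilon_i$, $P^+=\sum\mathbb N\omega_i$. Root vectors: $x^-_{i,j-1}=E_{j,i}-E_{-i,-j}$, $x^-_{i,\overline j}=E_{-j,i}+E_{-i,j}$ ($1\le i<j\le r$), $x^-_{i,\overline i}=E_{-i,i}$, and $x^-_{i,r}:=x^-_{i,\overline r}=E_{-r,i}+E_{-i,r}$ ($i<r$), $x^-_{r,r}=E_{-r,r}$. $\mathfrak n^-_{r-1/2}$ is the span of $x^-_{i,j}$ and $x^-_{i,\overline j}$ for $1\le i\le j<r$. $V(\lambda)$ is the irreducible finite-dimensional $\mathfrak g$-module of highest weight $\lambda$ (with respect to the Borel subalgebra spanned by $\mathfrak h$ and the matrices $x^+_{i,j-1}=E_{i,j}-E_{-j,-i}$, $x^+_{i,\overline j}=E_{i,-j}+E_{j,-i}$, $x^+_{i,\overline i}=E_{i,-i}$), with highest weight vector $v_\lambda$. *)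

From HB Require Import structures.
From mathcomp Require Import all_boot all_order all_algebra.
From mathcomp Require Import complex.
From mathcomp Require Import reals Rstruct.
Set Implicit Arguments. Unset Strict Implicit. Unset Printing Implicit Defensive.
Import Order.TTheory GRing.Theory Num.Theory.
Local Open Scope ring_scope.

Definition CC : Type := complex Rdefinitions.R.
Check (CC : fieldType).

(* Indices 1,...,r,-r,...,-1 of sp_{2r} are encoded (as integers k) in the
   positions 0,...,2r-1 of a 2r x 2r matrix: k>0 |-> k-1, k<0 |-> 2r+k. *)
Definition ix (r : nat) (k : int) : nat :=
  if (0 < k)%R then (`|k|%N).-1 else (r.*2 - `|k|%N)%N.

Definition E (r : nat) (k l : int) : 'M[CC]_(r.*2) :=
  \matrix_(a < r.*2, b < r.*2) ((nat_of_ord a == ix r k) && (nat_of_ord b == ix r l))%:R.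

Definition sgnp (r : nat) (p : 'I_(r.*2)) : CC := if (p < r)%N then 1 else -1.

(* sp_{2r}: a_{i,j} = - sgn(i) sgn(j) a_{-j,-i}; position of -i is rev_ord. *)
Definition is_sp (r : nat) (A : 'M[CC]_(r.*2)) : Prop :=
  forall p q : 'I_(r.*2), A p q = - (sgnp p * sgnp q) * A (rev_ord q) (rev_ord p).

Definition hcar (r i : nat) : 'M[CC]_(r.*2) := E r i i - E r (- i%:Z) (- i%:Z).

(* x^+_{i,j-1} = E_{i,j} - E_{-j,-i}  (1 <= i < j <= r) *)
Definition xp (r i j : nat) : 'M[CC]_(r.*2) := E r i j - E r (- j%:Z) (- i%:Z).
Definition xpbar (r i j : nat) : 'M[CC]_(r.*2) :=
  if i == j then E r i (- i%:Z) else E r i (- j%:Z) + E r j (- i%:Z).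

(* x^-_{i,j-1} = E_{j,i} - E_{-i,-j}  (1 <= i < j <= r);  xm r i j = x^-_{i,j-1} *)
Definition xm (r i j : nat) : 'M[CC]_(r.*2) := E r j i - E r (- i%:Z) (- j%:Z).
Definition xmbar (r i j : nat) : 'M[CC]_(r.*2) :=
  if i == j then E r (- i%:Z) i else E r (- j%:Z) i + E r (- i%:Z) j.
(* x^-_{i,r} := x^-_{i,\bar r} *)
Definition xmr (r i : nat) : 'M[CC]_(r.*2) := xmbar r i r.

(* n^-_{r-1/2}: span of x^-_{i,j} and x^-_{i,\bar j}, 1 <= i <= j < r.
   x^-_{i,j} = xm r i j.+1. *)
Definition nminus_gen (r : nat) (Y : 'M[CC]_(r.*2)) : Prop :=
  exists i j : nat, [/\ (1 <= i)%N, (i <= j)%N, (j < r)%N &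
                       (Y = xm r i j.+1 \/ Y = xmbar r i j)].

Definition in_span (T : lmodType CC) (S : T -> Prop) (x : T) : Prop :=
  exists (s : seq T) (c : seq CC),
    (forall y, y \in s -> S y) /\ x = \sum_(i < size s) c`_i *: s`_i.

Definition nminus (r : nat) (Y : 'M[CC]_(r.*2)) : Prop := in_span (@nminus_gen r) Y.

Definition is_rep (r n : nat) (rho : 'M[CC]_(r.*2) -> 'M[CC]_n) : Prop :=
  (forall (a : CC) X Y, is_sp X -> is_sp Y -> rho (a *: X + Y) = a *: rho X + rho Y) /\
  (forall X Y, is_sp X -> is_sp Y ->
     rho (X *m Y - Y *m X) = rho X *m rho Y - rho Y *m rho X).

Definition is_subspace (n : nat) (P : 'cV[CC]_n -> Prop) : Prop :=
  [/\ P 0, (forall u w, P u -> P w -> P (u + w)) & (forall (a : CC) u, P u -> P (a *: u))].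

Definition irreducible_rep (r n : nat) (rho : 'M[CC]_(r.*2) -> 'M[CC]_n) : Prop :=
  (0 < n)%N /\
  forall P : 'cV[CC]_n -> Prop, is_subspace P ->
    (forall X w, is_sp X -> P w -> P (rho X *m w)) ->
    (exists w, P w /\ w <> 0) -> forall w, P w.

(* v is a highest weight vector of weight lambda = sum_{i=1}^r m_i omega_i;
   lambda(h_i) = m_i + ... + m_r. *)
Definition highest_weight_vector (r n : nat) (rho : 'M[CC]_(r.*2) -> 'M[CC]_n)
    (m : nat -> nat) (v : 'cV[CC]_n) : Prop :=
  [/\ v <> 0,
      (forall i, (1 <= i <= r)%N ->
         rho (hcar r i) *m v = (\sum_(i <= j < r.+1) m j)%:R *: v),
      (forall i j, (1 <= i)%N -> (i < j <= r)%N -> rho (xp r i j) *m v = 0) &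
      (forall i j, (1 <= i)%N -> (i <= j <= r)%N -> rho (xpbar r i j) *m v = 0)].

Definition mpow (n : nat) (A : 'M[CC]_n) (k : nat) : 'M[CC]_n := iter k (mulmx A) 1%:M.

(* image in End(V) of a monomial y_1 ... y_l of U(n^-_{r-1/2}) *)
Definition Un_monomial (r n : nat) (rho : 'M[CC]_(r.*2) -> 'M[CC]_n) (M : 'M[CC]_n) : Prop :=
  exists ys : seq 'M[CC]_(r.*2),
    (forall y, y \in ys -> nminus y) /\ M = foldr (fun y acc => rho y *m acc) 1%:M ys.

Definition xr_prod (r n : nat) (rho : 'M[CC]_(r.*2) -> 'M[CC]_n) (k : nat -> nat) : 'M[CC]_n :=
  foldr (fun i acc => mpow (rho (xmr r i)) (k i) *m acc) 1%:M (iota 1 r).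

Definition gen_family (r n : nat) (rho : 'M[CC]_(r.*2) -> 'M[CC]_n)
    (m : nat -> nat) (v : 'cV[CC]_n) (w : 'cV[CC]_n) : Prop :=
  exists (M : 'M[CC]_n) (k : nat -> nat),
    [/\ Un_monomial rho M, (k 1%N <= m 1%N)%N & w = M *m (xr_prod rho k *m v)].

From HB Require Import structures.
From mathcomp Require Import all_boot all_order all_algebra.
From mathcomp Require Import complex.
From mathcomp Require Import reals Rstruct.
From mathcomp Require Import zify ring.
Set Implicit Arguments. Unset Strict Implicit. Unset Printing Implicit Defensive.
Import Order.TTheory GRing.Theory Num.Theory.
Local Open Scope ring_scope.

(* Since V is irreducible, it is spanned by the vectors y_1 ... y_l v with strictly
   lower triangular symplectic y_j: their span is stable, because an upper
   triangular element moves to the right past the y_j up to brackets and acts on v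
   by a scalar. Each strictly lower triangular symplectic matrix is a combination
   of elements of n^-_{r-1/2} and of the x^-_{i,r}, and the span S of the family
   U(n^-_{r-1/2}) x^k v is stable under both: under n^-_{r-1/2} by construction,
   under x^-_{i,r} because the x^-_{j,r} commute with each other and their brackets
   with n^-_{r-1/2} are again strictly lower triangular. It remains to see that
   x^k v lies in S when k_1 > m_1. The sl_2-triple of x^-_{1,1} gives
   (x^-_{1,1})^{m_1+1} v = 0, and [x^-_{1,1}, x^-_{2,r}] = -x^-_{1,r} lets one
   trade powers of x^-_{1,r} for x^-_{1,1} (in n^-_{r-1/2}) and x^-_{2,r} until the
   exponent of x^-_{1,r} is at most m_1. *)

Section Spanned.
Variables (T : lmodType CC) (S : T -> Prop).

Inductive spanned : T -> Prop :=
| spanned0 : spanned 0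
| spanned_cons y a w : S y -> spanned w -> spanned (a *: y + w).

Lemma in_spanP x : in_span S x <-> spanned x.
Proof.
split.
  case=> s [c [hs ->]]; elim: s c hs => [|y s IH] c hs.
    by rewrite big_ord0; constructor.
  rewrite big_ord_recl (eq_bigr (fun i : 'I_(size s) => (behead c)`_i *: s`_i)).
    apply: spanned_cons; first by apply: hs; rewrite mem_head.
    by apply: IH => z hz; apply: hs; rewrite inE hz orbT.
  by move=> i _; case: c {hs} => [|a c] /=; rewrite ?nth_nil.
elim=> [|y a w Sy _ [s [c [hs ->]]]]; first by exists [::], [::]; rewrite big_ord0.
exists (y :: s), (a :: c); split; last by rewrite big_ord_recl.
by move=> z; rewrite inE => /orP [/eqP -> | /hs].
Qed.

Lemma spanned_mem y : S y -> spanned y.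
Proof. by move=> Sy; rewrite -[y]addr0 -[y]scale1r; apply: spanned_cons => //; constructor. Qed.

Lemma spannedD u w : spanned u -> spanned w -> spanned (u + w).
Proof.
elim=> [|y a u' Sy _ IH] hw; first by rewrite add0r.
by rewrite -addrA; apply: spanned_cons => //; apply: IH.
Qed.

Lemma spannedZ b u : spanned u -> spanned (b *: u).
Proof.
elim=> [|y a u' Sy _ IH]; first by rewrite scaler0; constructor.
by rewrite scalerDr scalerA; apply: spanned_cons.
Qed.

Lemma spanned_min (P : T -> Prop) :
  P 0 -> (forall u w, P u -> P w -> P (u + w)) -> (forall a u, P u -> P (a *: u)) ->
  (forall y, S y -> P y) -> forall x, spanned x -> P x.
Proof. by move=> P0 PD PZ PS x; elim=> // y a w Sy _ Pw; apply: PD => //; apply/PZ/PS. Qed.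

End Spanned.

Section Subspace.
Variables (n : nat) (P : 'cV[CC]_n -> Prop).
Hypothesis subP : is_subspace P.

Lemma subspaceN u : P u -> P (- u).
Proof. by case: subP => _ _ PZ Pu; rewrite -scaleN1r; apply: PZ. Qed.

Lemma subspaceMn u k : P u -> P (u *+ k).
Proof.
case: subP => P0 PD _ Pu; elim: k => [|k IH]; first by rewrite mulr0n.
by rewrite mulrS; apply: PD.
Qed.

Lemma subspace_sum (I : Type) (s : seq I) (F : I -> 'cV[CC]_n) :
  (forall i, P (F i)) -> P (\sum_(i <- s) F i).
Proof.
case: subP => P0 PD _ PF; elim: s => [|i s IH]; first by rewrite big_nil.
by rewrite big_cons; apply: PD.
Qed.

Lemma subspace_mulmx_pow (A : 'M[CC]_n) :
  (forall u, P u -> P (A *m u)) -> forall k u, P u -> P ((A ^+ k) *m u).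
Proof.
move=> PA; elim=> [|k IH] u Pu; first by rewrite expr0 -idmxE mul1mx.
by rewrite exprS -mulmxE -mulmxA; apply/PA/IH.
Qed.

End Subspace.

Lemma spanned_subspace n (S : 'cV[CC]_n -> Prop) : is_subspace (spanned S).
Proof. by split; [constructor | exact: spannedD | exact: spannedZ]. Qed.

Lemma spanned_mulmx n (S S' : 'cV[CC]_n -> Prop) (A : 'M[CC]_n) :
  (forall y, S y -> spanned S' (A *m y)) -> forall w, spanned S w -> spanned S' (A *m w).
Proof.
move=> SA; apply: spanned_min; first by rewrite mulmx0; constructor.
- by move=> u w hu hw; rewrite mulmxDr; apply: spannedD.
- by move=> a u hu; rewrite -scalemxAr; apply: spannedZ.
- exact: SA.
Qed.

Lemma sgnp_rev r (p : 'I_(r.*2)) : sgnp (rev_ord p) = - sgnp p.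
Proof.
rewrite /sgnp /=; move: (ltn_ord p); case: (ltnP p r) => hp hp2.
  by rewrite ifF //; apply/negbTE; lia.
by rewrite ifT ?opprK //; lia.
Qed.

Lemma sgnp_sqr r (p : 'I_(r.*2)) : sgnp p * sgnp p = 1.
Proof. by rewrite /sgnp; case: ifP; rewrite ?mulr1 ?mulrNN ?mulr1. Qed.

Section SymplecticAlgebra.
Variable r : nat.
Implicit Types X Y : 'M[CC]_(r.*2).

Lemma sp0 : is_sp (0 : 'M[CC]_(r.*2)).
Proof. by move=> p q; rewrite !mxE mulr0. Qed.

Lemma spD X Y : is_sp X -> is_sp Y -> is_sp (X + Y).
Proof. by move=> hX hY p q; rewrite !mxE hX hY mulrDr. Qed.

Lemma spZ a X : is_sp X -> is_sp (a *: X).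
Proof. by move=> hX p q; rewrite !mxE hX; ring. Qed.

Lemma spN X : is_sp X -> is_sp (- X).
Proof. by rewrite -scaleN1r; apply: spZ. Qed.

Lemma spB X Y : is_sp X -> is_sp Y -> is_sp (X - Y).
Proof. by move=> hX hY; apply/spD/spN. Qed.

Lemma sp_sum (I : eqType) (s : seq I) (F : I -> 'M[CC]_(r.*2)) :
  (forall i, i \in s -> is_sp (F i)) -> is_sp (\sum_(i <- s) F i).
Proof.
elim: s => [|i s IH] hF; first by rewrite big_nil; apply: sp0.
rewrite big_cons; apply: spD; first by apply: hF; rewrite mem_head.
by apply: IH => j hj; apply: hF; rewrite inE hj orbT.
Qed.

Lemma sp_mulmx_rev X Y : is_sp X -> is_sp Y ->
  forall p q, (X *m Y) p q = sgnp p * sgnp q * (Y *m X) (rev_ord q) (rev_ord p).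
Proof.
move=> hX hY p q; rewrite !mxE (reindex_inj rev_ord_inj) /= mulr_sumr.
apply: eq_bigr => k _; rewrite hX hY !rev_ordK.
transitivity (sgnp p * sgnp q * (sgnp (rev_ord k) * sgnp (rev_ord k)) *
   (Y (rev_ord q) k * X k (rev_ord p))); first by ring.
by rewrite sgnp_sqr mulr1.
Qed.

Lemma sp_bracket X Y : is_sp X -> is_sp Y -> is_sp (X *m Y - Y *m X).
Proof.
move=> hX hY p q.
have mxB (M N : 'M[CC]_(r.*2)) a b : (M - N) a b = M a b - N a b by rewrite !mxE.
by rewrite !mxB (sp_mulmx_rev hX hY p q) (sp_mulmx_rev hY hX p q); ring.
Qed.

End SymplecticAlgebra.

Lemma scale_half_double (T : lmodType CC) (x : T) : 2^-1 *: (x + x) = x.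
Proof.
rewrite scalerDr -scalerDl.
have -> : (2^-1 + 2^-1 : CC) = 1 by rewrite [RHS](splitr 1) mul1r.
by rewrite scale1r.
Qed.

Lemma half_sp r (X : 'M[CC]_(r.*2)) : is_sp (X + X) -> is_sp X.
Proof. by move=> h; rewrite -[X]scale_half_double; apply: spZ. Qed.

Lemma E_mul r k l k' l' :
  E r k l *m E r k' l' = ((ix r l == ix r k') && (ix r l < r.*2)%N)%:R *: E r k l'.
Proof.
apply/matrixP => a b; rewrite !mxE.
case: (ltnP (ix r l) r.*2) => hl; last first.
  rewrite andbF mul0r big1 // => c _; rewrite !mxE.
  have -> : (nat_of_ord c == ix r l) = false by apply/negbTE; move: (ltn_ord c) hl; lia.
  by rewrite andbF mul0r.
rewrite (bigD1 (Ordinal hl)) //= big1 => [|c hc]; last first.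
  rewrite !mxE; have -> : (nat_of_ord c == ix r l) = false.
    by apply/negbTE; apply: contra hc => /eqP h; apply/eqP/val_inj.
  by rewrite andbF mul0r.
rewrite !mxE eqxx addr0 andbT.
by case: (_ == ix r k); case: (ix r l == _); case: (_ == ix r l'); rewrite ?mulr0 ?mul0r ?mulr1.
Qed.

Lemma E_delta r k l (p q : 'I_(r.*2)) : ix r k = p -> ix r l = q -> E r k l = delta_mx p q.
Proof. by move=> hk hl; apply/matrixP => a b; rewrite !mxE hk hl. Qed.

Lemma E_eq0 r k l (a b : 'I_(r.*2)) :
  (nat_of_ord a != ix r k) || (nat_of_ord b != ix r l) -> E r k l a b = 0.
Proof. by rewrite mxE => /orP [/negbTE -> | /negbTE ->]; rewrite ?andbF. Qed.

Section Representation.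
Variables (r n : nat) (rho : 'M[CC]_(r.*2) -> 'M[CC]_n).
Hypothesis rho_rep : is_rep rho.
Implicit Types X Y : 'M[CC]_(r.*2).

Lemma rho0 : rho 0 = 0.
Proof. by have := rho_rep.1 (-1) 0 0 (@sp0 r) (@sp0 r); rewrite scaler0 addr0 scaleN1r addNr. Qed.

Lemma rhoZ a X : is_sp X -> rho (a *: X) = a *: rho X.
Proof. by move=> hX; have := rho_rep.1 a X 0 hX (@sp0 r); rewrite !addr0 rho0 addr0. Qed.

Lemma rhoD X Y : is_sp X -> is_sp Y -> rho (X + Y) = rho X + rho Y.
Proof. by move=> hX hY; have := rho_rep.1 1 X Y hX hY; rewrite !scale1r. Qed.

Lemma rhoN X : is_sp X -> rho (- X) = - rho X.
Proof. by move=> hX; rewrite -scaleN1r rhoZ // scaleN1r. Qed.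

Lemma rhoB X Y : is_sp X -> is_sp Y -> rho (X - Y) = rho X - rho Y.
Proof. by move=> hX hY; rewrite rhoD ?rhoN //; apply: spN. Qed.

Lemma rho_sum (I : eqType) (s : seq I) (F : I -> 'M[CC]_(r.*2)) :
  (forall i, i \in s -> is_sp (F i)) -> rho (\sum_(i <- s) F i) = \sum_(i <- s) rho (F i).
Proof.
elim: s => [|i s IH] hF; first by rewrite !big_nil rho0.
have hs j : j \in s -> is_sp (F j) by move=> hj; apply: hF; rewrite inE hj orbT.
rewrite !big_cons rhoD ?IH //; first by apply: hF; rewrite mem_head.
exact: sp_sum.
Qed.

Lemma rho_bracket X Y : is_sp X -> is_sp Y ->
  rho (X *m Y - Y *m X) = rho X *m rho Y - rho Y *m rho X.
Proof. exact: rho_rep.2. Qed.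

Lemma rho_commute X Y : is_sp X -> is_sp Y -> X *m Y - Y *m X = 0 ->
  GRing.comm (rho X) (rho Y).
Proof. by move=> hX hY h; apply/eqP; rewrite -!mulmxE -subr_eq0 -rho_bracket // h rho0. Qed.

Lemma rho_swap X Y : is_sp X -> is_sp Y ->
  rho X *m rho Y = rho Y *m rho X + rho (X *m Y - Y *m X).
Proof. by move=> hX hY; rewrite rho_bracket // addrC subrK. Qed.

End Representation.

Definition sidx (r p : nat) : int := if (p < r)%N then Posz p.+1 else - Posz (r.*2 - p).

Lemma ix_sidx r p : (p < r.*2)%N -> ix r (sidx r p) = p.
Proof.
rewrite /sidx; case: ifP => // hpr hp.
have -> : (r.*2 - p = (r.*2 - p).-1.+1)%N by lia.
by rewrite /ix /=; lia.
Qed.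

Lemma sidx_rev r (p : 'I_(r.*2)) : sidx r (rev_ord p) = - sidx r p.
Proof.
rewrite /sidx /=; move: (ltn_ord p) => hp; case: (ltnP p r) => hpr.
  by rewrite ifF; [congr (- Posz _); lia | apply/negbTE; lia].
by rewrite ifT ?opprK; [congr Posz; lia | lia].
Qed.

Lemma rev_ord_eq r (a b : 'I_r) : (rev_ord a == b) = (a == rev_ord b).
Proof. by apply/eqP/eqP => [<- | ->]; rewrite rev_ordK. Qed.

Lemma rev_ord_ltn r (p q : 'I_r) : (rev_ord q < rev_ord p)%N = (p < q)%N.
Proof. by rewrite /=; move: (ltn_ord p) (ltn_ord q); lia. Qed.

Lemma rev_ord_leq r (p q : 'I_r) : (rev_ord q <= rev_ord p)%N = (p <= q)%N.
Proof. by rewrite /=; move: (ltn_ord p) (ltn_ord q); lia. Qed.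

Section SymplecticElementary.
Variable r : nat.
Implicit Types p q : 'I_(r.*2).

Definition spelem p q : 'M[CC]_(r.*2) :=
  delta_mx p q - (sgnp p * sgnp q) *: delta_mx (rev_ord q) (rev_ord p).

Lemma spelemE p q :
  spelem p q = E r (sidx r p) (sidx r q) - (sgnp p * sgnp q) *: E r (- sidx r q) (- sidx r p).
Proof.
rewrite /spelem -(@E_delta r (sidx r p) (sidx r q) p q) ?ix_sidx //.
by rewrite -(@E_delta r (- sidx r q) (- sidx r p) (rev_ord q) (rev_ord p)) // -sidx_rev ix_sidx.
Qed.

Lemma sp_delta_entry p q a b :
  - (sgnp a * sgnp b) * delta_mx p q (rev_ord b) (rev_ord a) =
  - (sgnp p * sgnp q) * delta_mx (rev_ord q) (rev_ord p) a b.
Proof.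
rewrite !mxE !rev_ord_eq andbC.
case: (eqVneq a (rev_ord q)) => [->|ha]; case: (eqVneq b (rev_ord p)) => [->|hb] /=;
  rewrite ?mulr0 // !sgnp_rev; ring.
Qed.

Lemma spelem_sp p q : is_sp (spelem p q).
Proof.
move=> a b.
have mxBZ (A B : 'M[CC]_(r.*2)) c (x y : 'I_(r.*2)) : (A - c *: B) x y = A x y - c * B x y.
  by rewrite !mxE.
rewrite /spelem !mxBZ mulrBr sp_delta_entry.
have := sp_delta_entry (rev_ord q) (rev_ord p) a b; rewrite !rev_ordK !sgnp_rev mulrCA => ->.
transitivity ((sgnp p * sgnp p) * (sgnp q * sgnp q) * delta_mx p q a b
              - sgnp p * sgnp q * delta_mx (rev_ord q) (rev_ord p) a b).
  by rewrite !sgnp_sqr !mul1r.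
ring.
Qed.

Lemma spelem_rev p q : spelem (rev_ord q) (rev_ord p) = - (sgnp p * sgnp q) *: spelem p q.
Proof.
have sgn2 : sgnp p * sgnp q * (sgnp p * sgnp q) = 1.
  by rewrite mulrACA !sgnp_sqr mulr1.
rewrite /spelem !rev_ordK !sgnp_rev mulrNN mulrC scalerBr scalerA mulNr sgn2 scaleN1r.
by rewrite opprK addrC scaleNr.
Qed.

(* spelem p q and spelem (rev_ord q) (rev_ord p) are proportional, so each
   entry of X is accounted for twice; hence the factor 1/2. *)
Lemma sp_spelem_sum X : is_sp X ->
  X = \sum_(p < r.*2) \sum_(q < r.*2) (X p q / 2) *: spelem p q.
Proof.
move=> hX.
have -> : \sum_(p < r.*2) \sum_(q < r.*2) (X p q / 2) *: spelem p q =
   2^-1 *: (\sum_p \sum_q X p q *: delta_mx p q)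
 - 2^-1 *: (\sum_p \sum_q (X p q * (sgnp p * sgnp q)) *: delta_mx (rev_ord q) (rev_ord p)).
  rewrite !scaler_sumr -sumrB; apply: eq_bigr => p _.
  rewrite !scaler_sumr -sumrB; apply: eq_bigr => q _.
  by rewrite /spelem scalerBr !scalerA; congr (_ *: _ - _ *: _); ring.
have -> : \sum_p \sum_q (X p q * (sgnp p * sgnp q)) *: delta_mx (rev_ord q) (rev_ord p) = - X.
  rewrite exchange_big /= (reindex_inj rev_ord_inj) /= [in RHS](matrix_sum_delta X) -sumrN.
  apply: eq_bigr => a _; rewrite (reindex_inj rev_ord_inj) /= -sumrN; apply: eq_bigr => b _.
  rewrite !rev_ordK -scaleNr (hX (rev_ord b) (rev_ord a)) !rev_ordK !sgnp_rev.
  transitivity ((- (sgnp a * sgnp a) * (sgnp b * sgnp b) * X a b) *: delta_mx a b).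
    by congr (_ *: _); ring.
  by rewrite !sgnp_sqr mulr1 mulN1r.
by rewrite -matrix_sum_delta scalerN opprK -scalerDr scale_half_double.
Qed.

Lemma spelem_pos_pos p q : (p < r)%N -> (q < r)%N ->
  spelem p q = E r p.+1 q.+1 - E r (- q.+1%:Z) (- p.+1%:Z).
Proof. by move=> hp hq; rewrite spelemE /sidx /sgnp hp hq mulr1 scale1r. Qed.

Lemma spelem_pos_neg p q : (p < r)%N -> (r <= q)%N ->
  spelem p q = E r p.+1 (- (r.*2 - q)%:Z) + E r (r.*2 - q)%N (- p.+1%:Z).
Proof.
move=> hp hq; rewrite spelemE /sidx /sgnp hp ltnNge hq /= opprK.
by rewrite mul1r scaleN1r opprK.
Qed.

Lemma spelem_neg_pos p q : (r <= p)%N -> (q < r)%N ->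
  spelem p q = E r (- (r.*2 - p)%:Z) q.+1 + E r (- q.+1%:Z) (r.*2 - p)%N.
Proof.
move=> hp hq; rewrite spelemE /sidx /sgnp hq ltnNge hp /= opprK.
by rewrite mulr1 scaleN1r opprK.
Qed.

End SymplecticElementary.

(* With positions ordered 1, ..., r, -r, ..., -1, the strictly lower triangular
   symplectic matrices form n^- and the upper triangular ones the Borel subalgebra. *)
Section Triangular.
Variable r : nat.
Implicit Types X Y : 'M[CC]_(r.*2).

Definition strictly_lower X := forall p q : 'I_(r.*2), (p <= q)%N -> X p q = 0.
Definition upper X := forall p q : 'I_(r.*2), (q < p)%N -> X p q = 0.

Lemma lower0 : strictly_lower 0.
Proof. by move=> p q _; rewrite mxE. Qed.

Lemma lowerD X Y : strictly_lower X -> strictly_lower Y -> strictly_lower (X + Y).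
Proof. by move=> hX hY p q h; rewrite mxE hX ?hY ?addr0. Qed.

Lemma lowerZ a X : strictly_lower X -> strictly_lower (a *: X).
Proof. by move=> hX p q h; rewrite mxE hX ?mulr0. Qed.

Lemma lowerM X Y : strictly_lower X -> strictly_lower Y -> strictly_lower (X *m Y).
Proof.
move=> hX hY p q hpq; rewrite mxE big1 // => k _.
case: (ltnP k p) => hk; last by rewrite hX ?mul0r.
by rewrite hY ?mulr0 //; apply: leq_trans hpq; apply: ltnW.
Qed.

Lemma lower_bracket X Y : strictly_lower X -> strictly_lower Y ->
  strictly_lower (X *m Y - Y *m X).
Proof. by move=> hX hY; rewrite -scaleN1r; apply/lowerD/lowerZ; apply: lowerM. Qed.

Lemma half_lower X : strictly_lower (X + X) -> strictly_lower X.
Proof. by move=> h; rewrite -[X]scale_half_double; apply: lowerZ. Qed.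

Lemma spelem_lower (p q : 'I_(r.*2)) : (q < p)%N -> strictly_lower (spelem p q).
Proof.
move=> hqp a b hab; move: (ltn_ord p) (ltn_ord q) => hp hq; rewrite !mxE.
have -> : (a == p) && (b == q) = false.
  by apply/negbTE/andP => [[/eqP ha /eqP hb]]; move: hab hqp; rewrite ha hb; lia.
have -> : (a == rev_ord q) && (b == rev_ord p) = false.
  by apply/negbTE/andP => [[/eqP ha /eqP hb]]; move: hab hqp; rewrite ha hb /=; lia.
by rewrite mulr0 subr0.
Qed.

Definition lower_part X : 'M[CC]_(r.*2) := \matrix_(p, q) (if (q < p)%N then X p q else 0).
Definition upper_part X : 'M[CC]_(r.*2) := \matrix_(p, q) (if (q < p)%N then 0 else X p q).

Lemma lower_upper_split X : X = lower_part X + upper_part X.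
Proof. by apply/matrixP => p q; rewrite !mxE; case: ifP; rewrite ?addr0 ?add0r. Qed.

Lemma lower_part_lower X : strictly_lower (lower_part X).
Proof. by move=> p q h; rewrite mxE ltnNge h. Qed.

Lemma upper_part_upper X : upper (upper_part X).
Proof. by move=> p q h; rewrite mxE h. Qed.

Lemma lower_part_sp X : is_sp X -> is_sp (lower_part X).
Proof. by move=> h p q; rewrite !mxE rev_ord_ltn; case: ifP => _; rewrite ?(h p q) ?mulr0. Qed.

Lemma upper_part_sp X : is_sp X -> is_sp (upper_part X).
Proof. by move=> h p q; rewrite !mxE rev_ord_ltn; case: ifP => _; rewrite ?(h p q) ?mulr0. Qed.

End Triangular.

Section LoweringGenerators.
Variable r : nat.

Definition nminus_or_xr (Y : 'M[CC]_(r.*2)) : Prop :=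
  nminus Y \/ exists2 i, (1 <= i <= r)%N & Y = xmr r i.

Lemma nminus_gen_nminus (Y : 'M[CC]_(r.*2)) : nminus_gen Y -> nminus Y.
Proof. by move=> hY; apply/in_spanP/spanned_mem. Qed.

Lemma xmbar_nminus_or_xr i j : (1 <= i <= j)%N -> (j <= r)%N -> nminus_or_xr (xmbar r i j).
Proof.
move=> hij hjr; case: (ltnP j r) => hj.
  by left; apply: nminus_gen_nminus; exists i, j; split; [lia | lia | lia | right].
by right; exists i; [lia | rewrite /xmr (_ : j = r) //; lia].
Qed.

Lemma spelem_lower_cases (p q : 'I_(r.*2)) : (q < p)%N ->
  exists c : CC, exists2 Y, nminus_or_xr Y & spelem p q = c *: Y.
Proof.
wlog hq : p q / (q < r)%N.
  move=> wlog_q hqp; case: (ltnP q r) => hqr; first exact: wlog_q.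
  have [||c [Y hY hpq]] := wlog_q (rev_ord q) (rev_ord p); rewrite ?rev_ord_ltn //.
    by move: (ltn_ord p); rewrite /=; lia.
  have := spelem_rev (rev_ord q) (rev_ord p); rewrite !rev_ordK => ->.
  by exists (- (sgnp (rev_ord q) * sgnp (rev_ord p)) * c), Y; rewrite // hpq scalerA.
move=> hqp; case: (ltnP p r) => hp.
  exists 1, (xm r q.+1 p.+1); last by rewrite scale1r spelem_pos_pos.
  by left; apply: nminus_gen_nminus; exists q.+1, p; split; [lia | lia | lia | left].
move: (ltn_ord p) => hp2; rewrite spelem_neg_pos //; set i := (r.*2 - p)%N.
have hir : (1 <= i <= r)%N by rewrite /i; lia.
case: (ltngtP q.+1 i) => hqi.
- exists 1, (xmbar r q.+1 i); last by rewrite scale1r /xmbar ltn_eqF.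
  by apply: xmbar_nminus_or_xr; lia.
- exists 1, (xmbar r i q.+1); last by rewrite scale1r /xmbar ltn_eqF // addrC.
  by apply: xmbar_nminus_or_xr; lia.
- exists 2%:R, (xmbar r i i); last by rewrite -hqi /xmbar eqxx scaler_nat mulr2n.
  by apply: xmbar_nminus_or_xr; lia.
Qed.

Lemma xm_sp_lower i j : (1 <= i < j)%N -> (j <= r)%N ->
  is_sp (xm r i j) /\ strictly_lower (xm r i j).
Proof.
case: i j => [|i] [|j] // hij hjr; have hp : (j < r.*2)%N by lia.
have hq : (i < r.*2)%N by lia.
have -> : xm r i.+1 j.+1 = spelem (Ordinal hp) (Ordinal hq).
  by rewrite spelem_pos_pos //=; lia.
by split; [apply: spelem_sp | apply: spelem_lower].
Qed.

Lemma xmbar_sp_lower i j : (1 <= i <= j)%N -> (j <= r)%N ->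
  is_sp (xmbar r i j) /\ strictly_lower (xmbar r i j).
Proof.
case: i => [|i] // hij hjr; have hp : (r.*2 - j < r.*2)%N by lia.
have hq : (i < r.*2)%N by lia.
have hqp : (Ordinal hq < Ordinal hp)%N by rewrite /=; lia.
have e : spelem (Ordinal hp) (Ordinal hq) = E r (- j%:Z) i.+1 + E r (- i.+1%:Z) j.
  by rewrite spelem_neg_pos /= ?subKn //; lia.
have [hsp hlow] := (spelem_sp (Ordinal hp) (Ordinal hq), spelem_lower hqp).
rewrite /xmbar; case: (eqVneq i.+1 j) => [ej | _]; last by rewrite -e.
rewrite e -ej in hsp hlow.
by split; [apply: half_sp | apply: half_lower].
Qed.

Lemma xmr_sp_lower i : (1 <= i <= r)%N -> is_sp (xmr r i) /\ strictly_lower (xmr r i).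
Proof. by move=> hi; apply: xmbar_sp_lower; lia. Qed.

Lemma nminus_sp_lower (Y : 'M[CC]_(r.*2)) : nminus Y -> is_sp Y /\ strictly_lower Y.
Proof.
move=> /in_spanP; move: Y; apply: (@spanned_min _ _ (fun Y => is_sp Y /\ strictly_lower Y)).
- by split; [apply: sp0 | apply: lower0].
- by move=> X Z [hX lX] [hZ lZ]; split; [apply: spD | apply: lowerD].
- by move=> a X [hX lX]; split; [apply: spZ | apply: lowerZ].
move=> _ [i [j [hi hij hjr [->|->]]]]; first by apply: xm_sp_lower; lia.
by apply: xmbar_sp_lower; lia.
Qed.

Lemma nminus_or_xr_sp_lower (Y : 'M[CC]_(r.*2)) : nminus_or_xr Y -> is_sp Y /\ strictly_lower Y.
Proof. by case=> [/nminus_sp_lower // | [i hi ->]]; apply: xmr_sp_lower. Qed.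

Definition lower_left_block (X : 'M[CC]_(r.*2)) :=
  forall a b : 'I_(r.*2), (a < r)%N || (r <= b)%N -> X a b = 0.

Lemma lower_left_block_mul0 X Y :
  lower_left_block X -> lower_left_block Y -> X *m Y = 0.
Proof.
move=> hX hY; apply/matrixP => a b; rewrite !mxE big1 // => k _.
case: (ltnP k r) => hk; first by rewrite (hY k b) ?hk ?mulr0.
by rewrite (hX a k) ?hk ?orbT ?mul0r.
Qed.

Lemma xmr_lower_left_block i : (1 <= i <= r)%N -> lower_left_block (xmr r i).
Proof.
move=> hi a b hab.
have ixP k : (0 < k)%N -> ix r k = k.-1 by case: k.
have ixN k : (0 < k)%N -> ix r (- k%:Z) = (r.*2 - k)%N by case: k.
rewrite /xmr /xmbar; case: ifP => _; first by apply: E_eq0; rewrite ixN ?ixP; lia.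
by rewrite mxE !E_eq0 ?addr0 // ixN ?ixP; lia.
Qed.

Lemma E_pos_pos_sp i j : (1 <= i <= r)%N -> (1 <= j <= r)%N ->
  is_sp (E r i j - E r (- j%:Z) (- i%:Z)).
Proof.
case: i j => [|i] [|j] // hi hj; have hp : (i < r.*2)%N by lia.
have hq : (j < r.*2)%N by lia.
by rewrite -(@spelem_pos_pos _ (Ordinal hp) (Ordinal hq)) //; apply: spelem_sp.
Qed.

Lemma xpbar_diag_sp i : (1 <= i <= r)%N -> is_sp (xpbar r i i).
Proof.
case: i => [|i] // hi; have hp : (i < r.*2)%N by lia.
have hq : (r.*2 - i.+1 < r.*2)%N by lia.
have := spelem_sp (Ordinal hp) (Ordinal hq).
rewrite spelem_pos_neg /= ?subKn; try lia.
by rewrite /xpbar eqxx; apply: half_sp.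
Qed.

End LoweringGenerators.

Section LinearCombinations.
Variables (r n : nat) (rho : 'M[CC]_(r.*2) -> 'M[CC]_n).
Hypothesis rho_rep : is_rep rho.

Lemma rho_spelem_sum (X : 'M[CC]_(r.*2)) (u : 'cV[CC]_n) : is_sp X ->
  rho X *m u = \sum_(p < r.*2) \sum_(q < r.*2) (X p q / 2) *: (rho (spelem p q) *m u).
Proof.
move=> hX; have spZe p q : is_sp ((X p q / 2) *: spelem p q) by apply/spZ/spelem_sp.
rewrite {1}(sp_spelem_sum hX) rho_sum // => [|p _]; last exact: sp_sum.
rewrite mulmx_suml; apply: eq_bigr => p _; rewrite rho_sum // mulmx_suml.
by apply: eq_bigr => q _; rewrite (rhoZ _ _ (spelem_sp p q)) // scalemxAl.
Qed.

Lemma subspace_rho_lower (P : 'cV[CC]_n -> Prop) (L : 'M[CC]_(r.*2)) (u : 'cV[CC]_n) :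
  is_subspace P -> is_sp L -> strictly_lower L ->
  (forall Y, nminus_or_xr Y -> P (rho Y *m u)) -> P (rho L *m u).
Proof.
move=> subP hL lL PY; have [P0 _ PZ] := subP.
rewrite rho_spelem_sum //; apply: (subspace_sum subP) => p; apply: (subspace_sum subP) => q.
case: (ltnP q p) => hqp; last by rewrite lL // mul0r scale0r.
have [c [Y hY ->]] := spelem_lower_cases hqp.
by rewrite (rhoZ _ _ (nminus_or_xr_sp_lower hY).1) // -scalemxAl; apply/PZ/PZ/PY.
Qed.

Variables (m : nat -> nat) (v : 'cV[CC]_n).
Hypothesis hwv : highest_weight_vector rho m v.

Lemma hw_spelem_eigen (p q : 'I_(r.*2)) :
  (p <= q)%N -> exists c : CC, rho (spelem p q) *m v = c *: v.
Proof.
have [_ hh hxp hxpb] := hwv.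
wlog hp : p q / (p < r)%N.
  move=> wlog_p hpq; case: (ltnP p r) => hpr; first exact: wlog_p.
  have [||c hc] := wlog_p (rev_ord q) (rev_ord p); rewrite ?rev_ord_leq //.
    by move: (ltn_ord q); rewrite /=; lia.
  have := spelem_rev (rev_ord q) (rev_ord p); rewrite !rev_ordK => ->.
  by rewrite (rhoZ _ _ (spelem_sp _ _)) // -scalemxAl hc scalerA; eexists.
move=> hpq; case: (ltnP q r) => hq.
  rewrite spelem_pos_pos //; have [hpq' | <-] : (p < q)%N \/ p = q :> nat by lia.
    by exists 0; rewrite scale0r; apply: (hxp p.+1 q.+1); lia.
  by rewrite -/(hcar r p.+1) hh; [eexists | lia].
move: (ltn_ord q) => hq2; rewrite spelem_pos_neg //; set j := (r.*2 - q)%N.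
have hjr : (1 <= j <= r)%N by rewrite /j; lia.
exists 0; rewrite scale0r; case: (ltngtP p.+1 j) => hpj.
- have -> : E r p.+1 (- j%:Z) + E r j (- p.+1%:Z) = xpbar r p.+1 j.
    by rewrite /xpbar ltn_eqF.
  by apply: hxpb; lia.
- have -> : E r p.+1 (- j%:Z) + E r j (- p.+1%:Z) = xpbar r j p.+1.
    by rewrite /xpbar ltn_eqF // addrC.
  by apply: hxpb; lia.
- have sp_jj : is_sp (xpbar r j j) by apply: xpbar_diag_sp.
  have -> : E r p.+1 (- j%:Z) + E r j (- p.+1%:Z) = xpbar r j j + xpbar r j j.
    by rewrite /xpbar eqxx hpj.
  by rewrite rhoD // mulmxDl hxpb ?addr0 //; lia.
Qed.

Lemma hw_upper_eigen (X : 'M[CC]_(r.*2)) :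
  is_sp X -> upper X -> exists c : CC, rho X *m v = c *: v.
Proof.
move=> hX uX; rewrite rho_spelem_sum //.
have line : is_subspace (fun w => exists c : CC, w = c *: v).
  split; first by exists 0; rewrite scale0r.
  - by move=> _ _ [a ->] [b ->]; exists (a + b); rewrite scalerDl.
  - by move=> a _ [b ->]; exists (a * b); rewrite scalerA.
apply: (subspace_sum line) => p; apply: (subspace_sum line) => q.
case: (ltnP q p) => hqp; first by exists 0; rewrite uX // mul0r !scale0r.
have [c ->] := hw_spelem_eigen hqp.
by exists (X p q / 2 * c); rewrite scalerA.
Qed.

End LinearCombinations.

Lemma eigenvalues_finite (R : fieldType) n (H : 'M[R]_n) (mu : nat -> R) : injective mu ->
  ~ (forall d, exists2 w : 'cV[R]_n, w != 0 & H *m w = mu d *: w).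
Proof.
move=> mu_inj eig.
have root_mu d : root (char_poly H^T) (mu d).
  rewrite -eigenvalue_root_char; have [w w_neq0 Hw] := eig d.
  by apply/eigenvalueP; exists w^T; [rewrite -trmx_mul Hw linearZ | rewrite trmx_eq0].
have : (size [seq mu d | d <- iota 0 n.+1] < size (char_poly H^T))%N.
  apply: max_poly_roots (monic_neq0 (char_poly_monic H^T)) _ _.
    by apply/allP => _ /mapP [d _ ->].
  by rewrite map_inj_uniq ?iota_uniq.
by rewrite size_map size_iota size_char_poly ltnn.
Qed.

Section SL2.
Variables (R : numFieldType) (n k : nat) (E F H : 'M[R]_n) (v : 'cV[R]_n).
Hypotheses (EF : E * F - F * E = H) (HF : H * F - F * H = - (F *+ 2)).
Hypotheses (Ev : E *m v = 0) (Hv : H *m v = k%:R *: v).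

Lemma sl2_weight j : H *m (F ^+ j *m v) = (k%:R - j.*2%:R) *: (F ^+ j *m v).
Proof.
elim: j => [|j IH]; first by rewrite expr0 -idmxE mul1mx Hv subr0.
have HF' : H * F = F * H - F *+ 2 by rewrite -HF addrC subrK.
rewrite exprS -mulmxE -!mulmxA mulmxA mulmxE HF' mulmxBl -mulmxE -mulmxA IH -scalemxAr.
rewrite mulr2n mulmxDl -mulr2n -scaler_nat -scalerBl; congr (_ *: _).
by rewrite doubleS -!natr1; ring.
Qed.

Lemma sl2_raise j : E *m (F ^+ j.+1 *m v) = (j.+1%:R * (k%:R - j%:R)) *: (F ^+ j *m v).
Proof.
have EF' : E * F = F * E + H by rewrite -EF addrC subrK.
have step i : E *m (F ^+ i.+1 *m v) = F *m (E *m (F ^+ i *m v)) + H *m (F ^+ i *m v).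
  by rewrite exprS -mulmxE -mulmxA mulmxA mulmxE EF' mulmxDl -mulmxE -mulmxA.
elim: j => [|j IH]; first by rewrite step expr0 -idmxE mul1mx Ev mulmx0 add0r Hv subr0 mul1r.
have FS : F *m (F ^+ j *m v) = F ^+ j.+1 *m v by rewrite exprS -mulmxE mulmxA.
rewrite step IH sl2_weight -scalemxAr FS -scalerDl; congr (_ *: _).
by rewrite -muln2 natrM -!natr1; ring.
Qed.

Lemma sl2_lowering_nilpotent : F ^+ k.+1 *m v = 0.
Proof.
apply/eqP/negPn/negP => nz.
have nzd d : F ^+ (k.+1 + d) *m v != 0.
  elim: d => [|d IH]; first by rewrite addn0.
  apply: contra IH; rewrite addnS => /eqP vanish.
  have c_neq0 : ((k.+1 + d).+1%:R * (k%:R - (k.+1 + d)%:R) : R) != 0.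
    by rewrite mulf_neq0 ?pnatr_eq0 // subr_eq0 eqr_nat ltn_eqF // leq_addr.
  have := sl2_raise (k.+1 + d); rewrite vanish mulmx0 => /esym/eqP.
  by rewrite scaler_eq0 (negbTE c_neq0).
apply: (@eigenvalues_finite _ _ H (fun d => k%:R - (k.+1 + d).*2%:R)).
  by move=> a b /addrI/oppr_inj/eqP; rewrite eqr_nat => /eqP; lia.
by move=> d; exists (F ^+ (k.+1 + d) *m v); [exact: nzd | exact: sl2_weight].
Qed.

End SL2.

Lemma mulrX_commutator (R : pzRingType) (F A D : R) :
  F * A = A * F + D -> GRing.comm A D ->
  forall k, F * A ^+ k = A ^+ k * F + (D * A ^+ k.-1) *+ k.
Proof.
move=> FA AD; elim=> [|k IH]; first by rewrite expr0 mulr1 mul1r mulr0n addr0.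
have -> : F * A ^+ k.+1 = A ^+ k.+1 * F + (A * (D * A ^+ k.-1)) *+ k + D * A ^+ k.
  rewrite exprS mulrA FA mulrDl -[A * F * _]mulrA IH mulrDr mulrnAr.
  by rewrite [A * (A ^+ k * F)]mulrA -exprS.
rewrite -addrA; congr (_ + _); case: k {IH} => [|k] /=; first by rewrite mulr0n add0r.
by rewrite [A * (D * _)]mulrA AD -[D * A * _]mulrA -exprS -mulrSr.
Qed.

Lemma mulmxMnl (R : pzRingType) m n p (A : 'M[R]_(m, n)) (B : 'M[R]_(n, p)) k :
  (A *+ k) *m B = (A *m B) *+ k.
Proof. exact: (raddfMn (mulmxr B)). Qed.

(* Applied with F = x^-_{1,1}, A1 = x^-_{1,r}, A2 = x^-_{2,r}, C = [F, A1] and X the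
   product of the remaining powers of x^-_{j,r}. *)
Section HeisenbergReduction.
Variables (n m : nat) (F A1 A2 X C : 'M[CC]_n) (v : 'cV[CC]_n).
Hypotheses (FA1 : F * A1 = A1 * F + C) (FA2 : F * A2 = A2 * F - A1).
Hypotheses (CF : GRing.comm C F) (A1C : GRing.comm A1 C) (A2A1 : GRing.comm A2 A1).
Hypotheses (FX : GRing.comm F X) (Fv : F ^+ m.+1 *m v = 0).
Variable P : 'cV[CC]_n -> Prop.
Hypotheses (subP : is_subspace P) (PF : forall w, P w -> P (F *m w)).
Hypotheses (PC : forall w, P w -> P (C *m w)).
Hypothesis P_low : forall j l, (j <= m)%N -> P ((A1 ^+ j * (A2 ^+ l * X)) *m v).

Definition heis_word p k l i := C ^+ p * (A1 ^+ k * (A2 ^+ l * (X * F ^+ i))).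

Lemma heis_word_shift p k l i :
  F * heis_word p k l i =
  heis_word p k l i.+1 + heis_word p.+1 k.-1 l i *+ k - heis_word p k.+1 l.-1 i *+ l.
Proof.
have FCp : F * C ^+ p = C ^+ p * F by apply/commrX/commr_sym.
have FA1k := mulrX_commutator FA1 A1C k.
have FA2l : F * A2 ^+ l = A2 ^+ l * F + (- A1 * A2 ^+ l.-1) *+ l.
  by apply: mulrX_commutator => //; apply: commrN.
rewrite /heis_word mulrA FCp -mulrA [F * (A1 ^+ k * _)]mulrA FA1k mulrDl -mulrA.
rewrite [F * (A2 ^+ l * _)]mulrA FA2l mulrDl -mulrA [F * (X * _)]mulrA FX -mulrA -exprS.
rewrite !mulrDr !mulrnAl !mulrnAr !mulNr !mulrN !mulNrn !mulrA !exprSr !mulrA.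
by rewrite addrAC.
Qed.

Lemma heis_word_low p j l i : (j + i <= m)%N -> P (heis_word p j l i *m v).
Proof.
have [_ PD _] := subP.
elim: i p j l => [|i IH] p j l hji.
  rewrite /heis_word expr0 mulr1 -mulmxE -mulmxA; apply: subspace_mulmx_pow => //.
  by apply: P_low; lia.
have -> : heis_word p j l i.+1 =
    F * heis_word p j l i - heis_word p.+1 j.-1 l i *+ j + heis_word p j.+1 l.-1 i *+ l.
  by rewrite heis_word_shift addrAC subrK addrK.
rewrite !mulmxDl mulNmx -mulmxE -mulmxA !mulmxMnl.
apply: (PD); [apply: (PD) |].
- by apply/PF/IH; lia.
- by apply/(subspaceN subP)/(subspaceMn subP)/IH; lia.
- by apply/(subspaceMn subP)/IH; lia.
Qed.

(* Induction on k: for k + i > m, the relation of heis_word_shift is solved for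
   heis_word p k l i, whose coefficient l.+1 is invertible in characteristic 0. *)
Lemma heis_word_in k : forall p l i, P (heis_word p k l i *m v).
Proof.
have [_ PD PZ] := subP.
elim: k {-2}k (leqnn k) => [|N IHN] k hkN p l i.
  case: (leqP (k + i) m) => hki; first exact: heis_word_low.
  have -> : heis_word p k l i *m v =
            (C ^+ p * (A1 ^+ k * (A2 ^+ l * (X * F ^+ (i - m.+1))))) *m (F ^+ m.+1 *m v).
    rewrite mulmxA mulmxE /heis_word -!mulrA -exprD subnK //; lia.
  by rewrite Fv mulmx0; case: subP.
case: (leqP (k + i) m) => hki; first exact: heis_word_low.
case: k hkN hki => [|k] hkN hki; first exact: IHN.
have -> : heis_word p k.+1 l i *m v =
          l.+1%:R^-1 *: ((heis_word p k.+1 l i *+ l.+1) *m v).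
  by rewrite mulmxMnl -[(_ *m v) *+ _]scaler_nat scalerA mulVf ?scale1r // pnatr_eq0.
apply: PZ; have -> : heis_word p k.+1 l i *+ l.+1 =
    heis_word p k l.+1 i.+1 + heis_word p.+1 k.-1 l.+1 i *+ k - F * heis_word p k l.+1 i.
  by rewrite heis_word_shift opprB addrC subrK.
rewrite !mulmxDl mulNmx mulmxMnl; apply: (PD); [apply: (PD) |].
- by apply: IHN; lia.
- by apply/(subspaceMn subP)/IHN; lia.
- by rewrite -mulmxE -mulmxA; apply/(subspaceN subP)/PF/IHN; lia.
Qed.

Lemma heisenberg_reduction k l : P ((A1 ^+ k * (A2 ^+ l * X)) *m v).
Proof. by have := heis_word_in k 0 l 0; rewrite /heis_word expr0 mul1r mulr1. Qed.

End HeisenbergReduction.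

Lemma ix_pos r i : ix r i.+1 = i.
Proof. by []. Qed.

Lemma ix_neg r i : ix r (- i.+1%:Z) = (r.*2 - i.+1)%N.
Proof. by []. Qed.

(* Brackets of explicit matrices: expand the products of elementary matrices
   with E_mul, decide the resulting index comparisons, and compare entrywise,
   treating the remaining Kronecker deltas as ring atoms. *)
Ltac decide_nat :=
  match goal with
  | |- context [@eq_op ?T ?a ?b] =>
      lazymatch type of a with nat =>
      first [ rewrite (_ : (a == b) = true); last by apply/eqP; lia
            | rewrite (_ : (a == b) = false); last by apply/negbTE/eqP; lia ] end
  | |- context [leq ?a ?b] =>
      first [ rewrite (_ : (leq a b) = true); last by lia
            | rewrite (_ : (leq a b) = false); last by apply/negbTE; lia ]
  end.

Ltac expand_E :=
  rewrite ?(mulmxDl, mulmxDr, mulmxBl, mulmxBr, mulNmx, mulmxN, E_mul) ?ix_pos ?ix_neg.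

Ltac entrywise :=
  repeat decide_nat; apply/matrixP => a b; rewrite !mxE /=;
  repeat match goal with |- context [@Algebra.natmul ?R ?one (nat_of_bool ?x)] =>
    generalize (@Algebra.natmul R one (nat_of_bool x)); intro end.

Section BracketsRankGe2.
Variable r' : nat.
Local Notation r := r'.+2.

Lemma bracket_xp12_xm12 : xp r 1 2 *m xm r 1 2 - xm r 1 2 *m xp r 1 2 = hcar r 1 - hcar r 2.
Proof. rewrite /xp /xm /hcar; expand_E; entrywise; ring. Qed.

Lemma bracket_h12_xm12 :
  (hcar r 1 - hcar r 2) *m xm r 1 2 - xm r 1 2 *m (hcar r 1 - hcar r 2) = - (xm r 1 2 *+ 2).
Proof. rewrite /xm /hcar mulr2n; expand_E; entrywise; ring. Qed.

End BracketsRankGe2.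

Section BracketsRankGe3.
Variable r' : nat.
Local Notation r := r'.+3.

Lemma bracket_xm12_xr2_ge3 : xm r 1 2 *m xmr r 2 - xmr r 2 *m xm r 1 2 = - xmr r 1.
Proof. rewrite /xm /xmr /xmbar; repeat decide_nat; rewrite /=; expand_E; entrywise; ring. Qed.

Lemma bracket_xm12_xr1_ge3 : xm r 1 2 *m xmr r 1 - xmr r 1 *m xm r 1 2 = 0.
Proof. rewrite /xm /xmr /xmbar; repeat decide_nat; rewrite /=; expand_E; entrywise; ring. Qed.

Lemma bracket_xm12_xr_ge3 j : (3 <= j <= r)%N -> xm r 1 2 *m xmr r j - xmr r j *m xm r 1 2 = 0.
Proof.
case: j => [|[|[|j]]] // hj; rewrite /xm /xmr /xmbar; case: ifP => /eqP hjr.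
  by case: hjr => ->; expand_E; entrywise; ring.
expand_E; entrywise; ring.
Qed.

End BracketsRankGe3.

Section BracketsRank2.
Local Notation r := 2%N.

Lemma bracket_xm12_xr2_2 : xm r 1 2 *m xmr r 2 - xmr r 2 *m xm r 1 2 = - xmr r 1.
Proof. rewrite /xm /xmr /xmbar /=; expand_E; entrywise; ring. Qed.

Lemma bracket_xm12_xr1_2 :
  xm r 1 2 *m xmr r 1 - xmr r 1 *m xm r 1 2 = - (xmbar r 1 1 *+ 2).
Proof. rewrite /xm /xmr /xmbar /= mulr2n; expand_E; entrywise; ring. Qed.

Lemma xmbar11_xm12_2 : xmbar r 1 1 *m xm r 1 2 = xm r 1 2 *m xmbar r 1 1.
Proof. rewrite /xm /xmbar /=; expand_E; entrywise; ring. Qed.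

Lemma xmbar11_xr1_2 : xmbar r 1 1 *m xmr r 1 = xmr r 1 *m xmbar r 1 1.
Proof. rewrite /xmr /xmbar /=; expand_E; entrywise; ring. Qed.

End BracketsRank2.

Section BracketsRank1.
Local Notation r := 1%N.

Lemma bracket_xpbar_xr_1 : xpbar r 1 1 *m xmr r 1 - xmr r 1 *m xpbar r 1 1 = hcar r 1.
Proof. rewrite /xpbar /xmr /xmbar /hcar /=; expand_E; entrywise; ring. Qed.

Lemma bracket_h_xr_1 : hcar r 1 *m xmr r 1 - xmr r 1 *m hcar r 1 = - (xmr r 1 *+ 2).
Proof. rewrite /xmr /xmbar /hcar /= mulr2n; expand_E; entrywise; ring. Qed.

End BracketsRank1.

Definition incr_at (k : nat -> nat) (i : nat) : nat -> nat :=
  fun j => if j == i then (k j).+1 else k j.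

Section OrderedProducts.
Variables (n : nat) (A : nat -> 'M[CC]_n).

Definition ordered_pow_prod (k : nat -> nat) (s : seq nat) : 'M[CC]_n :=
  foldr (fun i acc => mpow (A i) (k i) *m acc) 1%:M s.

Lemma mpowE (B : 'M[CC]_n) j : mpow B j = B ^+ j.
Proof.
by elim: j => [|j IH]; rewrite ?expr0 ?idmxE // /mpow iterS -/(mpow B j) IH exprS mulmxE.
Qed.

Lemma eq_ordered_pow_prod k k' s :
  {in s, k =1 k'} -> ordered_pow_prod k s = ordered_pow_prod k' s.
Proof.
elim: s => [|j s IH] kk' //=; rewrite kk' ?mem_head // IH // => i si.
by apply: kk'; rewrite inE si orbT.
Qed.

Lemma ordered_pow_prod_comm B k s :
  (forall j, j \in s -> GRing.comm B (A j)) -> GRing.comm B (ordered_pow_prod k s).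
Proof.
elim: s => [|j s IH] hB /=; first by rewrite idmxE; apply: commr1.
rewrite mulmxE mpowE; apply: commrM; first by apply/commrX/hB; rewrite mem_head.
by apply: IH => i si; apply: hB; rewrite inE si orbT.
Qed.

Lemma ordered_pow_prod_incr k s i :
  uniq s -> i \in s -> (forall j, j \in s -> GRing.comm (A i) (A j)) ->
  A i *m ordered_pow_prod k s = ordered_pow_prod (incr_at k i) s.
Proof.
elim: s => [|j s IH] //= /andP [js us] si hA.
have [<- | ji] := eqVneq j i.
  rewrite /incr_at eqxx mulmxA; congr (_ *m _).
  by apply: eq_ordered_pow_prod => l ls; rewrite ifN //; apply: contraNneq js => <-.
have {}si : i \in s by move: si; rewrite inE eq_sym (negbTE ji).
rewrite /incr_at (negbTE ji) -/(incr_at k i) mulmxA !mulmxE !mpowE.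
rewrite (commrX _ (hA j (mem_head _ _))) -mulrA -!mulmxE IH // => l ls.
by apply: hA; rewrite inE ls orbT.
Qed.

End OrderedProducts.

Section GeneratedSpan.
Variables (r n : nat) (rho : 'M[CC]_(r.*2) -> 'M[CC]_n) (m : nat -> nat) (v : 'cV[CC]_n).

Local Notation S := (spanned (gen_family rho m v)).
Local Notation monomial ys := (foldr (fun y acc => rho y *m acc) 1%:M ys).

Lemma gen_span_nminus Y w : nminus Y -> S w -> S (rho Y *m w).
Proof.
move=> hY; apply: spanned_mulmx => _ [M [k [[ys [hys ->]] hk ->]]].
apply: spanned_mem; exists (monomial (Y :: ys)), k; rewrite !mulmxA; split => //.
by exists (Y :: ys); split => // y; rewrite inE => /orP [/eqP -> | /hys].
Qed.

Lemma gen_span_monomial ys w :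
  (forall y, y \in ys -> nminus y) -> S w -> S (monomial ys *m w).
Proof.
elim: ys => [|y ys IH] hys hw /=; first by rewrite mul1mx.
rewrite -mulmxA; apply: gen_span_nminus; first by apply: hys; rewrite mem_head.
by apply: IH => // z zs; apply: hys; rewrite inE zs orbT.
Qed.

Lemma gen_span_xr k : (k 1%N <= m 1%N)%N -> S (xr_prod rho k *m v).
Proof.
by move=> hk; apply: spanned_mem; exists 1%:M, k; rewrite mul1mx; split => //; exists [::].
Qed.

Lemma gen_span_v : S v.
Proof.
have xr0 : xr_prod rho (fun _ => 0%N) = 1%:M.
  by rewrite /xr_prod; elim: (iota 1 r) => //= j s ->; rewrite mul1mx.
by have := @gen_span_xr (fun _ => 0%N) (leq0n _); rewrite xr0 mul1mx.
Qed.

End GeneratedSpan.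

Lemma rho_double r n (rho : 'M[CC]_(r.*2) -> 'M[CC]_n) X :
  is_rep rho -> is_sp X -> rho (X *+ 2) = rho X *+ 2.
Proof. by move=> rho_rep hX; rewrite !mulr2n rhoD. Qed.

Lemma rho_xr_commute r n (rho : 'M[CC]_(r.*2) -> 'M[CC]_n) i j : is_rep rho ->
  (1 <= i <= r)%N -> (1 <= j <= r)%N -> GRing.comm (rho (xmr r i)) (rho (xmr r j)).
Proof.
move=> rho_rep hi hj; apply: rho_commute => //; try exact: (xmr_sp_lower _).1.
by rewrite !lower_left_block_mul0 ?subr0 //; apply: xmr_lower_left_block.
Qed.

(* xm r 1 2 is x^-_{1,1}, the lowering operator of the sl_2-triple of the first
   simple root. *)
Section RankAtLeast2.
Variables (r' n : nat).
Local Notation r := r'.+2.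
Variables (rho : 'M[CC]_(r.*2) -> 'M[CC]_n) (m : nat -> nat) (v : 'cV[CC]_n).
Hypotheses (rho_rep : is_rep rho) (hwv : highest_weight_vector rho m v).

Local Notation F := (rho (xm r 1 2)).
Local Notation A j := (rho (xmr r j)).

Lemma xm12_nminus : nminus (xm r 1 2).
Proof. by apply: nminus_gen_nminus; exists 1%N, 1%N; split => //; left. Qed.

Lemma xm12_sp : is_sp (xm r 1 2).
Proof. exact: (nminus_sp_lower xm12_nminus).1. Qed.

Lemma xm12_pow_vanish : F ^+ (m 1%N).+1 *m v = 0.
Proof.
have [_ hh hxp _] := hwv.
have sp_xp : is_sp (xp r 1 2) by apply: E_pos_pos_sp.
have sp_h i : (1 <= i <= r)%N -> is_sp (hcar r i) by move=> hi; apply: E_pos_pos_sp.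
have sp_h12 : is_sp (hcar r 1 - hcar r 2) by apply: spB; apply: sp_h.
apply: (@sl2_lowering_nilpotent _ _ _ (rho (xp r 1 2)) _ (rho (hcar r 1 - hcar r 2))).
- by rewrite -!mulmxE -(rho_bracket rho_rep sp_xp xm12_sp) bracket_xp12_xm12.
- have sp2 : is_sp (xm r 1 2 *+ 2) by rewrite mulr2n; apply: spD; exact: xm12_sp.
  rewrite -!mulmxE -(rho_bracket rho_rep sp_h12 xm12_sp) bracket_h12_xm12.
  by rewrite rhoN // rho_double //; exact: xm12_sp.
- exact: hxp.
- rewrite (rhoB rho_rep (sp_h 1%N isT) (sp_h 2%N isT)) mulmxBl !hh // -scalerBl.
  congr (_ *: _).
  by rewrite big_ltn // natrD addrK.
Qed.

Variable c : 'M[CC]_(r.*2).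
Hypotheses (c_nminus : nminus c) (c_xm12 : c *m xm r 1 2 = xm r 1 2 *m c).
Hypotheses (c_xr1 : c *m xmr r 1 = xmr r 1 *m c).
Hypotheses (bracket_xr1 : xm r 1 2 *m xmr r 1 - xmr r 1 *m xm r 1 2 = c).
Hypotheses (bracket_xr2 : xm r 1 2 *m xmr r 2 - xmr r 2 *m xm r 1 2 = - xmr r 1).
Hypotheses (bracket_xr : forall j, (3 <= j <= r)%N ->
  xm r 1 2 *m xmr r j - xmr r j *m xm r 1 2 = 0).

Lemma gen_span_xr_ge2 k : spanned (gen_family rho m v) (xr_prod rho k *m v).
Proof.
have sp_A j : (1 <= j <= r)%N -> is_sp (xmr r j) by move=> hj; exact: (xmr_sp_lower hj).1.
have [sp_A1 sp_A2] : is_sp (xmr r 1) /\ is_sp (xmr r 2) by split; apply: sp_A.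
have sp_c := (nminus_sp_lower c_nminus).1.
have in3 j : j \in iota 3 r' -> (3 <= j <= r)%N by rewrite mem_iota; lia.
have xr_split k' : xr_prod rho k' =
    A 1%N ^+ k' 1%N * (A 2%N ^+ k' 2%N * ordered_pow_prod (fun j => A j) k' (iota 3 r')).
  by rewrite /xr_prod /= -!mulmxE !mpowE.
rewrite xr_split; apply: (@heisenberg_reduction _ (m 1%N) F _ _ _ (rho c)).
- by rewrite -!mulmxE (rho_swap rho_rep xm12_sp sp_A1) bracket_xr1.
- by rewrite -!mulmxE (rho_swap rho_rep xm12_sp sp_A2) bracket_xr2 rhoN.
- by apply: rho_commute => //; [exact: xm12_sp | apply/eqP; rewrite subr_eq0 c_xm12].
- by apply: rho_commute => //; apply/eqP; rewrite subr_eq0 c_xr1.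
- exact: rho_xr_commute.
- apply: ordered_pow_prod_comm => j /in3 hj.
  have hj1 : (1 <= j <= r)%N by lia.
  exact: (rho_commute rho_rep xm12_sp (sp_A j hj1) (bracket_xr hj)).
- exact: xm12_pow_vanish.
- exact: spanned_subspace.
- by move=> w; apply: gen_span_nminus; exact: xm12_nminus.
- by move=> w; apply: gen_span_nminus.
- move=> j l hj; pose k' i := if i == 1%N then j else if i == 2%N then l else k i.
  have := @gen_span_xr _ _ rho m v k' hj; rewrite xr_split /k' /=.
  congr (spanned _ ((_ * (_ * _)) *m _)); apply: eq_ordered_pow_prod => i /in3 hi.
  by rewrite !ifN //; apply/eqP; lia.
Qed.

End RankAtLeast2.

Lemma xr_pow_vanish_rank1 n (rho : 'M[CC]_((1%N).*2) -> 'M[CC]_n) m v :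
  is_rep rho -> highest_weight_vector rho m v -> rho (xmr 1 1) ^+ (m 1%N).+1 *m v = 0.
Proof.
move=> rho_rep [_ hh _ hxpb].
have sp_e : is_sp (xpbar 1 1 1) by apply: xpbar_diag_sp.
have [sp_f _] := @xmr_sp_lower 1 1 isT.
have sp_h : is_sp (hcar 1 1) by apply: E_pos_pos_sp.
apply: (@sl2_lowering_nilpotent _ _ _ (rho (xpbar 1 1 1)) _ (rho (hcar 1 1))).
- by rewrite -!mulmxE -(rho_bracket rho_rep sp_e sp_f) bracket_xpbar_xr_1.
- have sp2 : is_sp (xmr 1 1 *+ 2) by rewrite mulr2n; apply: spD.
  by rewrite -!mulmxE -(rho_bracket rho_rep sp_h sp_f) bracket_h_xr_1 rhoN // rho_double.
- exact: hxpb.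
- by rewrite hh // big_nat1.
Qed.

Lemma gen_span_xr_all r n (rho : 'M[CC]_(r.*2) -> 'M[CC]_n) m v :
  (0 < r)%N -> is_rep rho -> highest_weight_vector rho m v ->
  forall k, spanned (gen_family rho m v) (xr_prod rho k *m v).
Proof.
case: r rho => [|[|[|r']]] rho // _ rho_rep hwv k.
- case: (leqP (k 1%N) (m 1%N)) => hk; first exact: gen_span_xr.
  have -> : xr_prod rho k *m v = 0.
    rewrite /xr_prod /= mulmx1 mpowE -(subnK hk) exprD -mulmxE -mulmxA.
    by rewrite xr_pow_vanish_rank1 ?mulmx0.
  by constructor.
- have gen11 : nminus_gen (xmbar 2 1 1) by exists 1%N, 1%N; split => //; right.
  apply: (@gen_span_xr_ge2 0 n rho m v rho_rep hwv (- (xmbar 2 1 1 *+ 2))) => //.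
  + by apply/in_spanP; rewrite -scaler_nat -scaleNr; apply/spannedZ/spanned_mem.
  + by rewrite mulr2n mulNmx mulmxN mulmxDl xmbar11_xm12_2 -mulmxDr.
  + by rewrite mulr2n mulNmx mulmxN mulmxDl xmbar11_xr1_2 -mulmxDr.
  + exact: bracket_xm12_xr1_2.
  + exact: bracket_xm12_xr2_2.
  + by move=> j hj; lia.
- apply: (@gen_span_xr_ge2 r'.+1 n rho m v rho_rep hwv 0) => //.
  + by apply/in_spanP; constructor.
  + by rewrite mul0mx mulmx0.
  + by rewrite mul0mx mulmx0.
  + exact: bracket_xm12_xr1_ge3.
  + exact: bracket_xm12_xr2_ge3.
  + exact: bracket_xm12_xr_ge3.
Qed.

Section Invariance.
Variables (r n : nat) (rho : 'M[CC]_(r.*2) -> 'M[CC]_n) (m : nat -> nat) (v : 'cV[CC]_n).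
Hypotheses (r_gt0 : (0 < r)%N) (rho_rep : is_rep rho) (hwv : highest_weight_vector rho m v).

Local Notation S := (spanned (gen_family rho m v)).
Local Notation monomial ys := (foldr (fun y acc => rho y *m acc) 1%:M ys).

Lemma xr_mul_xr_prod i k : (1 <= i <= r)%N ->
  rho (xmr r i) *m xr_prod rho k = xr_prod rho (incr_at k i).
Proof.
move=> hi; apply: ordered_pow_prod_incr; [exact: iota_uniq | rewrite mem_iota; lia |].
by move=> j; rewrite mem_iota => hj; apply: rho_xr_commute => //; lia.
Qed.

(* x^-_{i,r} commutes with every x^-_{j,r}, and moving it past y in n^-_{r-1/2}
   costs the bracket [x^-_{i,r}, y], which is again strictly lower triangular. *)
Lemma gen_span_xr_monomial ys : (forall y, y \in ys -> nminus y) ->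
  forall i k, (1 <= i <= r)%N -> S (rho (xmr r i) *m (monomial ys *m (xr_prod rho k *m v))).
Proof.
elim: ys => [|y ys IH] hys i k hi.
  by rewrite /= mul1mx mulmxA xr_mul_xr_prod //; apply: gen_span_xr_all.
have hy : nminus y by apply: hys; rewrite mem_head.
have {}hys z : z \in ys -> nminus z by move=> zs; apply: hys; rewrite inE zs orbT.
have [[sp_y low_y] [sp_x low_x]] := (nminus_sp_lower hy, xmr_sp_lower hi).
set u := monomial ys *m (xr_prod rho k *m v).
rewrite /= -mulmxA -/u mulmxA (rho_swap rho_rep sp_x sp_y) mulmxDl.
apply: spannedD; first by rewrite -mulmxA; apply: gen_span_nminus => //; apply: IH.
apply: (subspace_rho_lower rho_rep (spanned_subspace _)).
- exact: sp_bracket.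
- exact: lower_bracket.
case=> [Y [hY | [j hj ->]]]; last exact: IH.
by apply: gen_span_nminus => //; apply: gen_span_monomial => //; apply: gen_span_xr_all.
Qed.

Lemma gen_span_xr_stable i w : (1 <= i <= r)%N -> S w -> S (rho (xmr r i) *m w).
Proof.
move=> hi; apply: spanned_mulmx => _ [M [k [[ys [hys ->]] _ ->]]].
exact: gen_span_xr_monomial.
Qed.

Lemma gen_span_lower_stable L w : is_sp L -> strictly_lower L -> S w -> S (rho L *m w).
Proof.
move=> hL lL hw; apply: (subspace_rho_lower rho_rep (spanned_subspace _)) => //.
by move=> Y [hY | [i hi ->]]; [apply: gen_span_nminus | apply: gen_span_xr_stable].
Qed.

Definition lowered_vector (w : 'cV[CC]_n) : Prop :=
  exists ys : seq 'M[CC]_(r.*2),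
    (forall y, y \in ys -> is_sp y /\ strictly_lower y) /\
    w = foldr (fun y acc => rho y *m acc) v ys.

Local Notation L := (spanned lowered_vector).

Lemma lowered_lower y w : is_sp y -> strictly_lower y -> L w -> L (rho y *m w).
Proof.
move=> sp_y low_y; apply: spanned_mulmx => _ [ys [hys ->]]; apply: spanned_mem.
by exists (y :: ys); split => // z; rewrite inE => /orP [/eqP -> | /hys].
Qed.

(* An upper triangular X moves past a lowering factor y at the cost of [X, y],
   whose lower part is again a lowering factor and whose upper part is handled
   by induction; on v itself X acts by a scalar. *)
Lemma lowered_upper ys : (forall y, y \in ys -> is_sp y /\ strictly_lower y) ->
  forall X, is_sp X -> upper X -> L (rho X *m foldr (fun y acc => rho y *m acc) v ys).
Proof.
elim: ys => [|y ys IH] hys X sp_X up_X /=.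
  have [c ->] := hw_upper_eigen rho_rep hwv sp_X up_X.
  by apply/spannedZ/spanned_mem; exists [::].
have [sp_y low_y] : is_sp y /\ strictly_lower y by apply: hys; rewrite mem_head.
have {}hys z : z \in ys -> is_sp z /\ strictly_lower z.
  by move=> zs; apply: hys; rewrite inE zs orbT.
have sp_br := sp_bracket sp_X sp_y.
rewrite mulmxA (rho_swap rho_rep sp_X sp_y) mulmxDl; apply: spannedD.
  by rewrite -mulmxA; apply: lowered_lower => //; apply: IH.
rewrite [X *m y - _]lower_upper_split.
rewrite (rhoD rho_rep (lower_part_sp sp_br) (upper_part_sp sp_br)) mulmxDl; apply: spannedD.
  apply: lowered_lower; [exact: lower_part_sp | exact: lower_part_lower |].
  by apply: spanned_mem; exists ys.
by apply: IH => //; [exact: upper_part_sp | exact: upper_part_upper].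
Qed.

Lemma lowered_invariant X w : is_sp X -> L w -> L (rho X *m w).
Proof.
move=> sp_X; apply: spanned_mulmx => _ [ys [hys ->]].
rewrite [X]lower_upper_split (rhoD rho_rep (lower_part_sp sp_X) (upper_part_sp sp_X)) mulmxDl.
apply: spannedD.
  apply: lowered_lower; [exact: lower_part_sp | exact: lower_part_lower |].
  by apply: spanned_mem; exists ys.
by apply: lowered_upper => //; [exact: upper_part_sp | exact: upper_part_upper].
Qed.

Lemma lowered_gen_span w : L w -> S w.
Proof.
apply: spanned_min => [||| _ [ys [hys ->]]]; [by constructor | exact: spannedD | exact: spannedZ |].
elim: ys hys => [|y ys IH] hys /=; first exact: gen_span_v.
have [sp_y low_y] : is_sp y /\ strictly_lower y by apply: hys; rewrite mem_head.
by apply: gen_span_lower_stable => //; apply: IH => z zs; apply: hys; rewrite inE zs orbT.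
Qed.

End Invariance.

Theorem lemma4p5 (r n : nat) (rho : 'M[CC]_(r.*2) -> 'M[CC]_n)
    (m : nat -> nat) (v : 'cV[CC]_n) :
  (0 < r)%N ->
  is_rep rho -> irreducible_rep rho -> highest_weight_vector rho m v ->
  forall w : 'cV[CC]_n, in_span (gen_family rho m v) w.
Proof.
move=> r_gt0 rho_rep [_ irr] hwv w.
apply/in_spanP/(lowered_gen_span r_gt0 rho_rep hwv)/(irr (spanned (lowered_vector rho v))).
- exact: spanned_subspace.
- by move=> X u; apply: (lowered_invariant rho_rep hwv).
- by exists v; split; [apply: spanned_mem; exists [::] | case: hwv].
Qed.
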